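(* For $n=0,1,2,\ldots$ let $R_n=\sum_{k=0}^n\binom{n}{k}\binom{n+k}{k}\frac{1}{2k-1}$. The sequence $\{\sqrt[n]{R_n}\}_{n=5}^\infty$ is strictly log-concave; equivalently, the sequence $\left\{\frac{\sqrt[n+1]{R_{n+1}}}{\sqrt[n]{R_n}}\right\}_{n=5}^\infty$ is strictly decreasing.
   Context: A sequence $\{z_n\}$ of positive numbers is strictly log-concave if $z_{n-1}z_{n+1}<z_n^2$ for all indices $n$ for which $z_{n-1},z_n,z_{n+1}$ belong to the sequence. *)

From Stdlib Require Import Reals.
Open Scope R_scope.

Definition Rseq (n : nat) : R :=
  sum_f_R0 (fun k => C n k * C (n + k) k / (2 * INR k - 1)) n.

(* z_n = R_n^{1/n}, the positive n-th root (meaningful for R_n > 0, n >= 1). *)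
Definition zseq (n : nat) : R := Rpower (Rseq n) (/ INR n).

From Stdlib Require Import Reals Lra Lia Psatz List Factorial.
Import ListNotations.
Open Scope R_scope.

(* Zeilberger's algorithm gives the recurrence
   (n + 3) R_(n+3) = (7n + 13) R_(n+2) - (7n + 15) R_(n+1) + (n + 1) R_n,
   whose characteristic polynomial (t - 1)(t^2 - 6t + 1) has dominant root 3 + 2 sqrt 2.
   Induction on the recurrence traps R_(n+1) / R_n between two truncations of its
   asymptotic expansion; polynomial certificates show that these bounds propagate, and
   that they force R_(n+3) R_(n+1)^3 < R_(n+2)^3 R_n, i.e. ln R_n has negative third
   differences.  For l_n = ln R_n, log-concavity of exp (l_n / n) is the negativity of
   g_q = x (x + 1) l_q - 2 (x^2 - 1) l_(q+1) + x (x - 1) l_(q+2) with x = q + 1, and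
   g_(q+1) - g_q = (q + 1)(q + 2) times the third difference, so a single numerical check
   g_5 < 0 suffices. *)

Ltac nonzero := first [assumption | apply Rgt_not_eq; lra | apply Rlt_not_eq; lra].

Lemma twice_INR_minus_1_neq_0 (k : nat) : 2 * INR k - 1 <> 0.
Proof. destruct k as [|k]; [simpl; lra | rewrite S_INR; pose proof (pos_INR k); lra]. Qed.

Definition rterm (m k : nat) : R :=
  if (k <=? m)%nat then
    INR (fact (m + k)) / (INR (fact k) * INR (fact k) * INR (fact (m - k))) / (2 * INR k - 1)
  else 0.

Lemma rterm_out_of_range (m k : nat) : (m < k)%nat -> rterm m k = 0.
Proof. intros Hk. unfold rterm. replace (k <=? m)%nat with false by (symmetry; apply Nat.leb_gt; lia). reflexivity. Qed.

Lemma Rseq_rterm (n : nat) : Rseq n = sum_f_R0 (rterm n) n.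
Proof.
  unfold Rseq. apply sum_eq. intros k Hk.
  unfold rterm. replace (k <=? n)%nat with true by (symmetry; apply Nat.leb_le; lia).
  unfold C. replace (n + k - k)%nat with n by lia.
  pose proof (INR_fact_neq_0 n). pose proof (INR_fact_neq_0 k).
  pose proof (INR_fact_neq_0 (n - k)). pose proof (INR_fact_neq_0 (n + k)).
  pose proof (twice_INR_minus_1_neq_0 k).
  field. repeat split; auto.
Qed.

Lemma sum_f_R0_vanishing_tail (f : nat -> R) (m j : nat) :
  (forall k, (m < k)%nat -> f k = 0) -> sum_f_R0 f (m + j) = sum_f_R0 f m.
Proof.
  intros Hf. induction j as [|j IH]; [now rewrite Nat.add_0_r|].
  replace (m + S j)%nat with (S (m + j)) by lia. simpl. rewrite IH, Hf by lia. ring.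
Qed.

Lemma Rseq_rterm_extend (m j : nat) : Rseq m = sum_f_R0 (rterm m) (m + j).
Proof.
  rewrite sum_f_R0_vanishing_tail; [apply Rseq_rterm | intros; now apply rterm_out_of_range].
Qed.

Lemma sum_f_R0_telescope (g : nat -> R) (N : nat) :
  sum_f_R0 (fun k => g (S k) - g k) N = g (S N) - g O.
Proof. induction N as [|N IH]; simpl; [ring | rewrite IH; simpl; ring]. Qed.

Lemma sum_f_R0_scal_l (a : R) (f : nat -> R) (N : nat) :
  sum_f_R0 (fun k => a * f k) N = a * sum_f_R0 f N.
Proof. rewrite scal_sum. apply sum_eq. intros; ring. Qed.

Lemma rterm_succ_l (m k : nat) :
  rterm m k = rterm (S m) k * (INR m + 1 - INR k) / (INR m + 1 + INR k).
Proof.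
  pose proof (pos_INR m). pose proof (pos_INR k).
  unfold rterm. destruct (Nat.leb_spec k m) as [Hkm|Hkm].
  - replace (k <=? S m)%nat with true by (symmetry; apply Nat.leb_le; lia).
    replace (S m + k)%nat with (S (m + k)) by lia.
    replace (S m - k)%nat with (S (m - k)) by lia.
    rewrite !fact_simpl, !mult_INR, !S_INR, plus_INR, minus_INR by lia.
    pose proof (INR_fact_neq_0 k).
    pose proof (INR_fact_neq_0 (m - k)). pose proof (INR_fact_neq_0 (m + k)).
    pose proof (twice_INR_minus_1_neq_0 k).
    assert (INR k <= INR m) by (apply le_INR; exact Hkm).
    field. repeat split; nonzero.
  - destruct (Nat.leb_spec k (S m)) as [Hk|Hk].
    + replace k with (S m) by lia. rewrite S_INR. unfold Rdiv. ring.
    + unfold Rdiv. ring.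
Qed.

Lemma rterm_succ_r (m k : nat) :
  rterm m (k + 1) * ((INR k + 1) * (INR k + 1)) * (2 * INR k + 1) =
  rterm m k * (INR m + INR k + 1) * (INR m - INR k) * (2 * INR k - 1).
Proof.
  unfold rterm. destruct (Nat.leb_spec (k + 1) m) as [Hkm|Hkm].
  - replace (k <=? m)%nat with true by (symmetry; apply Nat.leb_le; lia).
    replace (m + (k + 1))%nat with (S (m + k)) by lia.
    replace (k + 1)%nat with (S k) by lia.
    replace (m - k)%nat with (S (m - S k)) by lia.
    rewrite !fact_simpl, !mult_INR, !S_INR, plus_INR.
    replace (INR (m - S k)) with (INR m - INR k - 1) by (rewrite minus_INR, S_INR by lia; ring).
    pose proof (INR_fact_neq_0 k).
    pose proof (INR_fact_neq_0 (m - S k)). pose proof (INR_fact_neq_0 (m + k)).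
    pose proof (twice_INR_minus_1_neq_0 k). pose proof (pos_INR k).
    assert (INR k + 1 <= INR m) by (rewrite <- S_INR; apply le_INR; lia).
    field. repeat split; nonzero.
  - destruct (Nat.leb_spec k m) as [Hk|Hk]; [replace k with m by lia|]; ring.
Qed.

(* Zeilberger's certificate for the recurrence of [Rseq]. *)
Definition zeilberger_cert (n k : nat) : R :=
  match k with
  | O => 0
  | S j =>
      let x := INR n in let y := INR k in
      rterm (n + 3) j
      * (96 - 88*y + 16*y^2 + 72*x - 60*x*y + 8*x*y^2 + 12*x^2 - 8*x^2*y)
      / ((x + y + 1) * (x + y + 2))
  end.

Lemma rterm_recurrence_telescopes (n k : nat) : (k <= n + 3)%nat ->
  (INR n + 3) * rterm (n + 3) k - (7 * INR n + 13) * rterm (n + 2) k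
  + (7 * INR n + 15) * rterm (n + 1) k - (INR n + 1) * rterm n k
  = zeilberger_cert n (S k) - zeilberger_cert n k.
Proof.
  intros Hk. pose proof (pos_INR n). pose proof (pos_INR k).
  unfold zeilberger_cert.
  replace (n + 1)%nat with (S n) by lia. replace (n + 2)%nat with (S (S n)) by lia.
  replace (n + 3)%nat with (S (S (S n))) by lia.
  rewrite (rterm_succ_l n), (rterm_succ_l (S n)), (rterm_succ_l (S (S n))), !S_INR.
  destruct k as [|j].
  - simpl. field. repeat split; nonzero.
  - pose proof (pos_INR j). pose proof (twice_INR_minus_1_neq_0 j).
    assert (Hj : INR j + 1 <= INR n + 1 + 1 + 1) by (rewrite <- !S_INR; apply le_INR; lia).
    assert (Hback : rterm (S (S (S n))) j
        = rterm (S (S (S n))) (S j) * ((INR j + 1) * (INR j + 1)) * (2 * INR j + 1)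
        / ((INR n + 1 + 1 + 1 + INR j + 1) * (INR n + 1 + 1 + 1 - INR j) * (2 * INR j - 1))).
    { pose proof (rterm_succ_r (S (S (S n))) j) as E. rewrite Nat.add_1_r, !S_INR in E.
      rewrite E. field. repeat split; nonzero. }
    rewrite Hback, !S_INR. field. repeat split; nonzero.
Qed.

Lemma Rseq_recurrence (n : nat) :
  (INR n + 3) * Rseq (n + 3) =
  (7 * INR n + 13) * Rseq (n + 2) - (7 * INR n + 15) * Rseq (n + 1) + (INR n + 1) * Rseq n.
Proof.
  assert (Hsum : sum_f_R0 (fun k => (INR n + 3) * rterm (n + 3) k - (7 * INR n + 13) * rterm (n + 2) k
     + (7 * INR n + 15) * rterm (n + 1) k - (INR n + 1) * rterm n k) (n + 3) = 0).
  { rewrite (sum_eq _ (fun k => zeilberger_cert n (S k) - zeilberger_cert n k))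
      by (intros; apply rterm_recurrence_telescopes; assumption).
    rewrite sum_f_R0_telescope. unfold zeilberger_cert.
    rewrite S_INR, plus_INR. simpl (INR 3). pose proof (pos_INR n).
    field. split; nonzero. }
  rewrite !minus_sum, plus_sum, !minus_sum, !sum_f_R0_scal_l in Hsum.
  rewrite (Rseq_rterm_extend (n + 3) 0), (Rseq_rterm_extend (n + 2) 1),
    (Rseq_rterm_extend (n + 1) 2), (Rseq_rterm_extend n 3).
  replace (n + 3 + 0)%nat with (n + 3)%nat in * by lia.
  replace (n + 2 + 1)%nat with (n + 3)%nat by lia.
  replace (n + 1 + 2)%nat with (n + 3)%nat by lia.
  lra.
Qed.

Lemma Rseq_next (n m : nat) (a b c : R) : m = (n + 3)%nat ->
  Rseq n = a -> Rseq (n + 1) = b -> Rseq (n + 2) = c ->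
  Rseq m = ((7 * INR n + 13) * c - (7 * INR n + 15) * b + (INR n + 1) * a) / (INR n + 3).
Proof.
  intros -> Ha Hb Hc. pose proof (Rseq_recurrence n) as E. pose proof (pos_INR n).
  rewrite Ha, Hb, Hc in E. field_simplify_eq; [lra | nonzero].
Qed.

Lemma Rseq_0 : Rseq 0 = -1.
Proof. rewrite Rseq_rterm. unfold rterm. simpl. field. Qed.
Lemma Rseq_1 : Rseq 1 = 1.
Proof. rewrite Rseq_rterm. unfold rterm. simpl. field. Qed.
Lemma Rseq_2 : Rseq 2 = 7.
Proof. rewrite Rseq_rterm. unfold rterm. simpl. field. Qed.
Lemma Rseq_3 : Rseq 3 = 25.
Proof. rewrite (Rseq_next 0 3 (-1) 1 7 eq_refl Rseq_0 Rseq_1 Rseq_2). simpl. field. Qed.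
Lemma Rseq_4 : Rseq 4 = 87.
Proof. rewrite (Rseq_next 1 4 1 7 25 eq_refl Rseq_1 Rseq_2 Rseq_3). simpl. field. Qed.
Lemma Rseq_5 : Rseq 5 = 329.
Proof. rewrite (Rseq_next 2 5 7 25 87 eq_refl Rseq_2 Rseq_3 Rseq_4). simpl. field. Qed.
Lemma Rseq_6 : Rseq 6 = 1359.
Proof. rewrite (Rseq_next 3 6 25 87 329 eq_refl Rseq_3 Rseq_4 Rseq_5). simpl. field. Qed.
Lemma Rseq_7 : Rseq 7 = 6001.
Proof. rewrite (Rseq_next 4 7 87 329 1359 eq_refl Rseq_4 Rseq_5 Rseq_6). simpl. field. Qed.
Lemma Rseq_8 : Rseq 8 = 27759.
Proof. rewrite (Rseq_next 5 8 329 1359 6001 eq_refl Rseq_5 Rseq_6 Rseq_7). simpl. field. Qed.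

Lemma rterm_nonneg (m k : nat) : (1 <= k)%nat -> 0 <= rterm m k.
Proof.
  intros Hk. unfold rterm. destruct (k <=? m)%nat; [|lra].
  assert (1 <= INR k) by (apply (le_INR 1); exact Hk).
  pose proof (INR_fact_lt_0 (m + k)). pose proof (INR_fact_lt_0 k).
  pose proof (INR_fact_lt_0 (m - k)).
  left. apply Rdiv_lt_0_compat; [apply Rdiv_lt_0_compat|]; [lra | | lra].
  repeat apply Rmult_lt_0_compat; lra.
Qed.

(* Only the summand [k = 0] is negative, and the summand [k = 1] outweighs it. *)
Lemma Rseq_pos (n : nat) : (1 <= n)%nat -> 0 < Rseq n.
Proof.
  intros Hn. destruct n as [|[|p]]; [lia | rewrite Rseq_1; lra|].
  rewrite Rseq_rterm, decomp_sum, decomp_sum by lia. simpl pred.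
  assert (Hrest : 0 <= sum_f_R0 (fun i => rterm (S (S p)) (S (S i))) p)
    by (apply cond_pos_sum; intros; apply rterm_nonneg; lia).
  assert (H0 : rterm (S (S p)) 0 = -1).
  { unfold rterm. simpl (0 <=? S (S p))%nat. cbv iota. rewrite Nat.add_0_r, Nat.sub_0_r.
    pose proof (INR_fact_neq_0 (S (S p))). simpl. field. nonzero. }
  assert (H1 : rterm (S (S p)) 1 = (INR p + 3) * (INR p + 2)).
  { unfold rterm. simpl (1 <=? S (S p))%nat. cbv iota.
    replace (S (S p) + 1)%nat with (S (S (S p))) by lia.
    replace (S (S p) - 1)%nat with (S p) by lia.
    rewrite (fact_simpl (S (S p))), (fact_simpl (S p)), !mult_INR, !S_INR.
    pose proof (INR_fact_neq_0 (S p)). pose proof (pos_INR p).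
    simpl (INR (fact 1)); change (INR 0) with 0. field. nonzero. }
  rewrite H0, H1. pose proof (pos_INR p). nra.
Qed.

Definition rt2 : R := sqrt 2.

Lemma rt2_sq : rt2 ^ 2 = 2.
Proof. unfold rt2. rewrite pow2_sqrt; lra. Qed.

Lemma rt2_cube : rt2 ^ 3 = 2 * rt2.
Proof. rewrite <- rt2_sq. ring. Qed.

Lemma rt2_bounds : 141421356 / 100000000 <= rt2 <= 141421357 / 100000000.
Proof. pose proof rt2_sq. assert (0 <= rt2) by apply sqrt_pos. split; nra. Qed.

Fixpoint horner (cs : list R) (m : R) : R :=
  match cs with
  | [] => 0
  | c :: cs' => c + m * horner cs' m
  end.

Lemma horner_nonneg (cs : list R) (m : R) :
  Forall (Rle 0) cs -> 0 <= m -> 0 <= horner cs m.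
Proof.
  intros Hcs Hm. induction Hcs as [|c cs Hc _ IH]; simpl; [lra|].
  apply Rplus_le_le_0_compat; [exact Hc | now apply Rmult_le_pos].
Qed.

Lemma horner_pos (c : R) (cs : list R) (m : R) :
  0 < c -> Forall (Rle 0) cs -> 0 <= m -> 0 < horner (c :: cs) m.
Proof.
  intros Hc Hcs Hm. simpl. pose proof (horner_nonneg cs m Hcs Hm).
  apply Rplus_lt_le_0_compat; [exact Hc | now apply Rmult_le_pos].
Qed.

Lemma Rle_0_of_scaled (D e p : R) : 0 < D -> D * e = p -> 0 <= p -> 0 <= e.
Proof. intros HD Hp Hp0. apply (Rmult_le_reg_l D); lra. Qed.

Lemma Rlt_0_of_scaled (D e p : R) : 0 < D -> D * e = p -> 0 < p -> 0 < e.
Proof. intros HD Hp Hp0. apply (Rmult_lt_reg_l D); lra. Qed.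

Definition ub_num (x : R) : R :=
  (192 + 128 * rt2) * x ^ 3 - (288 + 192 * rt2) * x ^ 2 + (192 + 102 * rt2) * x - (519 + 255 * rt2).

(* Truncations of the asymptotic expansion of [Rseq (n + 1) / Rseq n] in powers of [1 / n]. *)
Definition ratio_ub (x : R) : R := ub_num x / (64 * x ^ 3).
Definition ratio_lb (x : R) : R := (x * ub_num x - 576 * (3 + 2 * rt2)) / (64 * x ^ 4).

(* Each inequality below is cleared of denominators and written as a polynomial in [x - x0]
   with coefficients [a + b rt2 >= 0]; the identity is checked after reducing both sides
   modulo [rt2 ^ 2 = 2]. *)
Ltac certificate_identity :=
  unfold ratio_lb, ratio_ub, ub_num; cbn [horner];
  field_simplify_eq;
  [ ring_simplify; rewrite ?rt2_cube, ?rt2_sq; ring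
  | repeat split; try apply pow_nonzero; lra ].

Ltac certificate_coeffs :=
  pose proof rt2_bounds; repeat (apply Forall_cons; [lra|]); apply Forall_nil.

Ltac certificate_denominator :=
  repeat apply Rmult_lt_0_compat; try apply pow_lt; lra.

Ltac certify_nonneg D cs m :=
  apply (Rle_0_of_scaled D _ (horner cs m));
  [ certificate_denominator | certificate_identity
  | apply horner_nonneg; [certificate_coeffs | lra] ].

Ltac certify_pos D cs m :=
  apply (Rlt_0_of_scaled D _ (horner cs m));
  [ certificate_denominator | certificate_identity
  | apply horner_pos; [pose proof rt2_bounds; lra | certificate_coeffs | lra] ].

Lemma ratio_lb_le_ub (x : R) : 0 < x -> ratio_lb x <= ratio_ub x.
Proof.
  intros Hx. enough (0 <= ratio_ub x - ratio_lb x) by lra.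
  certify_nonneg (64 * x ^ 4) [576 * (3 + 2 * rt2)] x.
Qed.

Lemma ratio_lb_ge_4 (x : R) : 6 <= x -> 4 <= ratio_lb x.
Proof.
  intros Hx. enough (0 <= ratio_lb x - 4) by lra.
  certify_nonneg (64 * x ^ 4)
    [-143082 + 125406 * rt2; -84615 + 90825 * rt2; -18816 + 24294 * rt2;
     -1824 + 2880 * rt2; -64 + 128 * rt2] (x - 6).
Qed.

Lemma ratio_ub_le_6 (x : R) : 1 <= x -> ratio_ub x <= 6.
Proof.
  intros Hx. enough (0 <= 6 - ratio_ub x) by lra.
  certify_nonneg (64 * x ^ 3)
    [807 + 217 * rt2; 960 - 102 * rt2; 864 - 192 * rt2; 192 - 128 * rt2] (x - 1).
Qed.

Lemma ratio_ub_inductive (x : R) : 6 <= x ->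
  0 <= (x + 3) * ratio_ub (x + 1) * ratio_lb x * ratio_ub (x + 2)
       - (7 * x + 13) * ratio_ub (x + 1) * ratio_lb x + (7 * x + 15) * ratio_lb x - (x + 1).
Proof.
  intros Hx.
  certify_nonneg (262144 * (x + 1) ^ 3 * x ^ 4 * (x + 2) ^ 3)
    [18869017269114 + 24033089025162 * rt2; 21832206576729 + 25744010885781 * rt2;
     10493829762975 + 11677678736457 * rt2; 2740310897760 + 2914365891966 * rt2;
     421628839992 + 432491162904 * rt2; 38284596864 + 38152337712 * rt2;
     1899349248 + 1850317824 * rt2; 39650304 + 37979136 * rt2] (x - 6).
Qed.

Lemma ratio_lb_inductive (x : R) : 6 <= x ->
  0 <= (7 * x + 13) * ratio_lb (x + 1) * ratio_ub x - (7 * x + 15) * ratio_ub x + (x + 1)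
       - (x + 3) * ratio_lb (x + 1) * ratio_ub x * ratio_lb (x + 2).
Proof.
  intros Hx.
  certify_nonneg (262144 * x ^ 3 * (x + 1) ^ 4 * (x + 2) ^ 4)
    [125161834648056 + 13717100829048 * rt2; 214582061673639 + 71272141262031 * rt2;
     147729895817520 + 66584349709182 * rt2; 55007288442513 + 28708422827865 * rt2;
     12320203593384 + 6999601440330 * rt2; 1716800975688 + 1029895800888 * rt2;
     146291848320 + 91083031248 * rt2; 6999316224 + 4475240448 * rt2;
     144374784 + 94141440 * rt2] (x - 6).
Qed.

Lemma ratio_bounds_cubic (x : R) : 6 <= x ->
  0 < (x + 3) * ratio_lb (x + 1) ^ 3
      - ((7 * x + 13) * ratio_lb (x + 1) - (7 * x + 15)) * ratio_ub x - (x + 1).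
Proof.
  intros Hx.
  certify_pos (262144 * (x + 1) ^ 12 * x ^ 3)
    [1601660225138456856 + 1237733014110263832 * rt2; 3314323330321107324 + 2524370543833566540 * rt2;
     3183717676909644570 + 2393685621703717890 * rt2; 1877003521000169853 + 1395289395103754889 * rt2;
     756740194418101014 + 557040482903944128 * rt2; 220055077799805888 + 160635430820409804 * rt2;
     47438009812006272 + 34385485252642560 * rt2; 7669825375485807 + 5526810960803127 * rt2;
     929486618839512 + 666510789292758 * rt2; 83349674137272 + 59527000252488 * rt2;
     5373856707456 + 3825216988464 * rt2; 235840735488 + 167421861888 * rt2;
     6313608192 + 4472128512 * rt2; 77856768 + 55050240 * rt2] (x - 6).
Qed.

Definition recurrence3 (x a b c d : R) : Prop :=
  (x + 3) * d = (7 * x + 13) * c - (7 * x + 15) * b + (x + 1) * a.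

Section RecurrenceSteps.

Variables x a b c d : R.
Hypotheses (x_ge0 : 0 <= x) (a_pos : 0 < a) (b_pos : 0 < b) (c_pos : 0 < c).
Hypothesis rec : recurrence3 x a b c d.

Lemma recurrence3_upper (U1 L0 U2 : R) :
  c <= U1 * b -> L0 * a <= b -> 4 <= L0 -> 0 < U1 ->
  0 <= (x + 3) * U1 * L0 * U2 - (7 * x + 13) * U1 * L0 + (7 * x + 15) * L0 - (x + 1) ->
  d <= U2 * c.
Proof.
  intros Hc Hb HL0 HU1 Hpoly.
  assert (Hscaled : (x + 3) * U1 * L0 * (U2 * c - d) =
      c * ((x + 3) * U1 * L0 * U2 - (7 * x + 13) * U1 * L0 + (7 * x + 15) * L0 - (x + 1))
      + (U1 * b - c) * ((7 * x + 15) * L0 - (x + 1)) + (x + 1) * U1 * (b - L0 * a)).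
  { replace ((x + 3) * U1 * L0 * (U2 * c - d))
      with ((x + 3) * U1 * L0 * U2 * c - U1 * L0 * ((x + 3) * d)) by ring.
    rewrite rec. ring. }
  enough (0 <= U2 * c - d) by lra.
  apply (Rle_0_of_scaled ((x + 3) * U1 * L0) _ _ ltac:(repeat apply Rmult_lt_0_compat; lra) Hscaled).
  repeat apply Rplus_le_le_0_compat; apply Rmult_le_pos; nra.
Qed.

Lemma recurrence3_lower (L1 U0 L2 : R) :
  L1 * b <= c -> b <= U0 * a -> 4 <= U0 -> 0 < L1 ->
  0 <= (7 * x + 13) * L1 * U0 - (7 * x + 15) * U0 + (x + 1) - (x + 3) * L1 * U0 * L2 ->
  L2 * c <= d.
Proof.
  intros Hc Hb HU0 HL1 Hpoly.
  assert (Hscaled : (x + 3) * L1 * U0 * (d - L2 * c) =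
      c * ((7 * x + 13) * L1 * U0 - (7 * x + 15) * U0 + (x + 1) - (x + 3) * L1 * U0 * L2)
      + (c - L1 * b) * ((7 * x + 15) * U0 - (x + 1)) + (x + 1) * L1 * (U0 * a - b)).
  { replace ((x + 3) * L1 * U0 * (d - L2 * c))
      with (L1 * U0 * ((x + 3) * d) - (x + 3) * L1 * U0 * L2 * c) by ring.
    rewrite rec. ring. }
  enough (0 <= d - L2 * c) by lra.
  apply (Rle_0_of_scaled ((x + 3) * L1 * U0) _ _ ltac:(repeat apply Rmult_lt_0_compat; lra) Hscaled).
  repeat apply Rplus_le_le_0_compat; apply Rmult_le_pos; nra.
Qed.

(* With [r = b / a] and [t = c / b], the recurrence makes [(x + 3) d / a] affine in [r];
   the deficit of [d < t ^ 3 a] decreases in [r] and increases in [t], so the worst case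
   is [r = U], [t = L]. *)
Lemma recurrence3_cubic (U L : R) :
  b <= U * a -> L * b <= c -> 4 <= L -> U <= 6 ->
  0 < (x + 3) * L ^ 3 - ((7 * x + 13) * L - (7 * x + 15)) * U - (x + 1) ->
  d * b ^ 3 < c ^ 3 * a.
Proof.
  intros Hb Hc HL HU Hpoly.
  set (r := b / a). set (t := c / b).
  assert (Eb : b = r * a) by (unfold r; field; lra).
  assert (Ec : c = t * b) by (unfold t; field; lra).
  assert (Hr : 0 < r <= U).
  { unfold r. split; [apply Rdiv_lt_0_compat; lra|].
    apply (Rmult_le_reg_r a); [lra|]. unfold Rdiv. rewrite Rmult_assoc, Rinv_l; lra. }
  assert (Ht : L <= t).
  { unfold t. apply (Rmult_le_reg_r b); [lra|]. unfold Rdiv. rewrite Rmult_assoc, Rinv_l; lra. }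
  assert (Hd : (x + 3) * d = a * ((7 * x + 13) * t * r - (7 * x + 15) * r + (x + 1))).
  { rewrite rec, Ec, Eb. ring. }
  assert (Hdeficit : (7 * x + 13) * t * r - (7 * x + 15) * r + (x + 1) < (x + 3) * t ^ 3).
  { assert (0 <= (t - L) * ((x + 3) * (t * t + t * L + L * L) - (7 * x + 13) * U)).
    { apply Rmult_le_pos; [lra|]. assert (48 <= t * t + t * L + L * L) by nra. nra. }
    assert (0 <= ((7 * x + 13) * t - (7 * x + 15)) * (U - r)) by (apply Rmult_le_pos; nra).
    nra. }
  assert (d < t ^ 3 * a).
  { apply (Rmult_lt_reg_l (x + 3)); [lra|]. rewrite Hd. nra. }
  rewrite Ec, Eb.
  replace ((t * (r * a)) ^ 3 * a) with ((t ^ 3 * a) * (r * a) ^ 3) by ring.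
  apply Rmult_lt_compat_r; [apply pow_lt; nra | assumption].
Qed.

End RecurrenceSteps.

Lemma Rseq_recurrence3 (n : nat) :
  recurrence3 (INR n) (Rseq n) (Rseq (n + 1)) (Rseq (n + 2)) (Rseq (n + 3)).
Proof. unfold recurrence3. rewrite Rseq_recurrence. ring. Qed.

Definition ratio_bounded (n : nat) : Prop :=
  ratio_lb (INR n) * Rseq n <= Rseq (n + 1) <= ratio_ub (INR n) * Rseq n.

Lemma ratio_bounded_6 : ratio_bounded 6.
Proof.
  unfold ratio_bounded, ratio_lb, ratio_ub, ub_num. simpl (6 + 1)%nat.
  rewrite Rseq_6, Rseq_7. pose proof rt2_bounds. simpl (INR 6). split; lra.
Qed.

Lemma ratio_bounded_7 : ratio_bounded 7.
Proof.
  unfold ratio_bounded, ratio_lb, ratio_ub, ub_num. simpl (7 + 1)%nat.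
  rewrite Rseq_7, Rseq_8. pose proof rt2_bounds. simpl (INR 7). split; lra.
Qed.

Lemma ratio_bounded_step (n : nat) : (6 <= n)%nat ->
  ratio_bounded n -> ratio_bounded (n + 1) -> ratio_bounded (n + 2).
Proof.
  intros Hn [H0l H0u] [H1l H1u].
  assert (Hx : 6 <= INR n) by (replace 6 with (INR 6) by (simpl; lra); apply le_INR; lia).
  pose proof (Rseq_recurrence3 n) as Hrec.
  pose proof (Rseq_pos n ltac:(lia)). pose proof (Rseq_pos (n + 1) ltac:(lia)).
  pose proof (Rseq_pos (n + 2) ltac:(lia)).
  replace (n + 1 + 1)%nat with (n + 2)%nat in * by lia.
  unfold ratio_bounded. replace (n + 2 + 1)%nat with (n + 3)%nat by lia.
  rewrite !plus_INR in *. simpl (INR 1) in *. simpl (INR 2).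
  pose proof (ratio_lb_ge_4 (INR n) Hx). pose proof (ratio_lb_ge_4 (INR n + 1) ltac:(lra)).
  pose proof (ratio_lb_le_ub (INR n) ltac:(lra)). pose proof (ratio_lb_le_ub (INR n + 1) ltac:(lra)).
  split.
  - apply recurrence3_lower with (x := INR n) (a := Rseq n) (b := Rseq (n + 1))
      (L1 := ratio_lb (INR n + 1)) (U0 := ratio_ub (INR n)).
    all: first [exact Hrec | now apply ratio_lb_inductive | lra].
  - apply recurrence3_upper with (x := INR n) (a := Rseq n) (b := Rseq (n + 1))
      (U1 := ratio_ub (INR n + 1)) (L0 := ratio_lb (INR n)).
    all: first [exact Hrec | now apply ratio_ub_inductive | lra].
Qed.

Lemma Rseq_ratio_bounded (n : nat) : (6 <= n)%nat -> ratio_bounded n.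
Proof.
  intros Hn.
  assert (Hpair : forall k, ratio_bounded (6 + k) /\ ratio_bounded (7 + k)).
  { induction k as [|k [IH6 IH7]]; [exact (conj ratio_bounded_6 ratio_bounded_7)|].
    replace (6 + S k)%nat with (7 + k)%nat by lia.
    replace (7 + S k)%nat with (6 + k + 2)%nat by lia.
    split; [exact IH7|].
    apply ratio_bounded_step; [lia | exact IH6 | now replace (6 + k + 1)%nat with (7 + k)%nat by lia]. }
  replace n with (6 + (n - 6))%nat by lia. apply Hpair.
Qed.

Lemma Rseq_cubic (n : nat) : (5 <= n)%nat ->
  Rseq (n + 3) * Rseq (n + 1) ^ 3 < Rseq (n + 2) ^ 3 * Rseq n.
Proof.
  intros Hn. destruct (Nat.eq_dec n 5) as [->|Hn6].
  { simpl (5 + _)%nat. rewrite Rseq_5, Rseq_6, Rseq_7, Rseq_8. lra. }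
  assert (Hx : 6 <= INR n) by (replace 6 with (INR 6) by (simpl; lra); apply le_INR; lia).
  destruct (Rseq_ratio_bounded n ltac:(lia)) as [_ Hub].
  destruct (Rseq_ratio_bounded (n + 1) ltac:(lia)) as [Hlb _].
  replace (n + 1 + 1)%nat with (n + 2)%nat in Hlb by lia.
  rewrite plus_INR in Hlb. simpl (INR 1) in Hlb.
  apply recurrence3_cubic with (x := INR n) (U := ratio_ub (INR n)) (L := ratio_lb (INR n + 1)).
  all: first [ apply Rseq_recurrence3 | apply Rseq_pos; lia | now apply ratio_bounds_cubic
             | apply ratio_lb_ge_4; lra | apply ratio_ub_le_6; lra | lra ].
Qed.

Section ScaledLogConcavity.

Variable l : nat -> R.

Definition third_diff (q : nat) : R := l (q + 3) - 3 * l (q + 2) + 3 * l (q + 1) - l q.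

(* [x (x - 1) (x + 1)] times [l (x - 1) / (x - 1) + l (x + 1) / (x + 1) - 2 l x / x],
   for [x = q + 1]. *)
Definition concavity_gap (q : nat) : R :=
  let x := INR q + 1 in
  x * (x + 1) * l q - 2 * (x ^ 2 - 1) * l (q + 1) + x * (x - 1) * l (q + 2).

Lemma concavity_gap_succ (q : nat) :
  concavity_gap (S q) - concavity_gap q = (INR q + 1) * (INR q + 2) * third_diff q.
Proof.
  unfold concavity_gap, third_diff. rewrite S_INR.
  replace (S q + 1)%nat with (q + 2)%nat by lia. replace (S q + 2)%nat with (q + 3)%nat by lia.
  replace (S q) with (q + 1)%nat by lia. ring.
Qed.

Lemma concavity_gap_neg (q0 : nat) :
  concavity_gap q0 < 0 -> (forall q, (q0 <= q)%nat -> third_diff q < 0) ->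
  forall q, (q0 <= q)%nat -> concavity_gap q < 0.
Proof.
  intros Hbase Hdiff q Hq. induction Hq as [|q Hq IH]; [exact Hbase|].
  pose proof (concavity_gap_succ q). pose proof (Hdiff q Hq). pose proof (pos_INR q).
  assert (0 < (INR q + 1) * (INR q + 2)) by (apply Rmult_lt_0_compat; lra).
  nra.
Qed.

Lemma exp_scaled_log_concave (q : nat) : (1 <= q)%nat -> concavity_gap q < 0 ->
  exp (/ INR q * l q) * exp (/ INR (q + 2) * l (q + 2)) < exp (/ INR (q + 1) * l (q + 1)) ^ 2.
Proof.
  intros Hq Hgap.
  replace (exp (/ INR (q + 1) * l (q + 1)) ^ 2)
    with (exp (/ INR (q + 1) * l (q + 1) + / INR (q + 1) * l (q + 1))) by (rewrite exp_plus; ring).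
  rewrite <- exp_plus. apply exp_increasing.
  assert (1 <= INR q) by (apply (le_INR 1); exact Hq).
  rewrite !plus_INR. replace (INR 1) with 1 by reflexivity. replace (INR 2) with 2 by (simpl; lra).
  enough (0 < / (INR q + 1) * l (q + 1) + / (INR q + 1) * l (q + 1)
              - (/ INR q * l q + / (INR q + 2) * l (q + 2))) by lra.
  apply (Rlt_0_of_scaled (INR q * (INR q + 1) * (INR q + 2)) _ (- concavity_gap q)).
  - repeat apply Rmult_lt_0_compat; lra.
  - unfold concavity_gap. field. repeat split; nonzero.
  - lra.
Qed.

End ScaledLogConcavity.

Lemma ln_Rseq_third_diff_neg (q : nat) : (5 <= q)%nat -> third_diff (fun n => ln (Rseq n)) q < 0.
Proof.
  intros Hq. pose proof (Rseq_cubic q Hq) as H.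
  pose proof (Rseq_pos q ltac:(lia)). pose proof (Rseq_pos (q + 1) ltac:(lia)).
  pose proof (Rseq_pos (q + 2) ltac:(lia)). pose proof (Rseq_pos (q + 3) ltac:(lia)).
  apply ln_increasing in H; [| apply Rmult_lt_0_compat; [lra | apply pow_lt; lra]].
  rewrite !ln_mult, !ln_pow in H by (try apply pow_lt; lra).
  unfold third_diff. simpl (INR 3) in H. lra.
Qed.

Lemma ln_Rseq_concavity_gap_5 : concavity_gap (fun n => ln (Rseq n)) 5 < 0.
Proof.
  unfold concavity_gap. simpl (5 + _)%nat. rewrite Rseq_5, Rseq_6, Rseq_7. simpl (INR 5).
  assert (H : 329 ^ 42 * 6001 ^ 30 < 1359 ^ 70).
  { rewrite !pow_IZR, <- mult_IZR. apply IZR_lt. vm_compute. reflexivity. }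
  apply ln_increasing in H; [| apply Rmult_lt_0_compat; apply pow_lt; lra].
  rewrite !ln_mult, !ln_pow in H by (try apply pow_lt; lra).
  simpl (INR 42) in H; simpl (INR 30) in H; simpl (INR 70) in H. lra.
Qed.

Theorem theorem4p5 :
  (forall n : nat, (5 <= n)%nat -> 0 < Rseq n) /\
  (forall n : nat, (6 <= n)%nat ->
     zseq (n - 1) * zseq (n + 1) < zseq n ^ 2).
Proof.
  split; [intros n Hn; apply Rseq_pos; lia|].
  intros n Hn. destruct n as [|q]; [lia|].
  replace (S q - 1)%nat with q by lia.
  replace (S q + 1)%nat with (q + 2)%nat by lia. replace (S q) with (q + 1)%nat by lia.
  unfold zseq, Rpower.
  apply (exp_scaled_log_concave (fun n => ln (Rseq n))); [lia|].
  apply (concavity_gap_neg _ 5); [exact ln_Rseq_concavity_gap_5 | exact ln_Rseq_third_diff_neg | lia].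
Qed.
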